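(* Let $f:S^1\to S^1$ be a Denjoy homeomorphism with Cantor set $\Gamma$ and arc $J_0$ as described in the context, let $\Delta$ be the partition of $S^1$ into $f$-orbits, $Y=S^1/\Delta$ with the quotient topology, $p:S^1\to Y$ the projection, $Q=p(\Gamma)$ and $J=p(S^1\setminus\Gamma)$. Then: (a) if $U\subset S^1$ is open and $U\cap\Gamma\neq\varnothing$, then $U$ meets every $f$-orbit, i.e. $p^{-1}(p(U))=S^1$; (b) every open $V\subset Y$ with $V\cap Q\neq\varnothing$ equals $Y$; (c) every subset $L\subset Y$ with $L\cap Q\neq\varnothing$ is compact; (d) if $k:Y\to Y$ is continuous and $k(y)\in J$ for some $y\in Q$, then $k$ is constant (with value $k(y)$).
   Context: A Denjoy homeomorphism here is an orientation preserving homeomorphism $f:S^1\to S^1$ with irrational rotation number such that (i) there is a nowhere dense Cantor set $\Gamma\subset S^1$ with $f(\Gamma)=\Gamma$ and the orbit $\{f^k(x):k\in\mathbb{Z}\}$ of every $x\in\Gamma$ is dense in $\Gamma$; (ii) there is an open arc $J_0\subset S^1$ such that $S^1\setminus\Gamma=\bigsqcup_{m\in\mathbb{Z}} f^m(J_0)$ (disjoint union). Write $J_m=f^m(J_0)$. *)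

From HB Require Import structures.
From mathcomp Require Import all_boot all_order all_algebra.
From mathcomp Require Import all_classical all_reals all_analysis.
Set Implicit Arguments. Unset Strict Implicit. Unset Printing Implicit Defensive.
Import Order.TTheory GRing.Theory Num.Theory numFieldNormedType.Exports.
Local Open Scope classical_set_scope.
Local Open Scope ring_scope.
Local Open Scope quotient_scope.

Section Circle.
Variable R : realType.

Definition circ_rel (x y : R) : bool := (x - y) \is a Num.int.

Lemma circ_rel_refl : reflexive circ_rel.
Proof. by move=> x; rewrite /circ_rel subrr. Qed.

Lemma circ_rel_sym : symmetric circ_rel.
Proof. by move=> x y; rewrite /circ_rel -opprB rpredN. Qed.

Lemma circ_rel_trans : transitive circ_rel.
Proof.
move=> y x z; rewrite /circ_rel => hxy hyz.
have -> : x - z = (x - y) + (y - z) by rewrite addrA subrK.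
by rewrite rpredD.
Qed.

Definition circ_equiv := EquivRel circ_rel circ_rel_refl circ_rel_sym circ_rel_trans.

Definition S1 : Type := quotient_topology {eq_quot circ_equiv}.
Definition piS : R -> S1 := \pi_S1.
End Circle.
Arguments piS {R}.

Section Orbits.
Context {T : topologicalType}.

(* x ~ y iff f^m x = f^n y for some m n : nat.  For a bijection f this is
   exactly "y = f^k x for some k : int", i.e. x and y lie in the same f-orbit. *)
Definition orbit_rel (f : T -> T) (x y : T) : bool :=
  `[< exists m n : nat, iter m f x = iter n f y >].

Lemma orbit_rel_refl f : reflexive (orbit_rel f).
Proof. by move=> x; apply/asboolP; exists 0%N, 0%N. Qed.

Lemma orbit_rel_sym f : symmetric (orbit_rel f).
Proof.
move=> x y; apply/asboolP/asboolP => -[m [n h]]; by exists n, m.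
Qed.

Lemma orbit_rel_trans f : transitive (orbit_rel f).
Proof.
move=> y x z /asboolP [m [n h1]] /asboolP [m' [n' h2]]; apply/asboolP.
exists (m + m')%N, (n + n')%N.
by rewrite addnC iterD h1 -iterD addnC iterD h2 -iterD.
Qed.

Definition orbit_equiv f :=
  EquivRel (orbit_rel f) (orbit_rel_refl f) (@orbit_rel_sym f) (@orbit_rel_trans f).

Definition orbit_space (f : T -> T) : Type :=
  quotient_topology {eq_quot orbit_equiv f}.
Definition orbit_proj (f : T -> T) : T -> orbit_space f := \pi_(orbit_space f).

Definition zit (f g : T -> T) (m : int) : T -> T :=
  match m with Posz n => iter n f | Negz n => iter n.+1 g end.

Definition zorbit (f g : T -> T) (x : T) : set T := range (fun k : int => zit f g k x).

Definition homeomorphism (f g : T -> T) :=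
  [/\ continuous f, continuous g, cancel f g & cancel g f].

Definition cantor_subset (A : set T) :=
  [/\ A !=set0, compact A, perfect_set A & totally_disconnected A].

Definition nowhere_dense (A : set T) := (closure A)° = set0.
End Orbits.

Section Denjoy.
Variable R : realType.
Local Notation S1 := (S1 R).

(* F : R -> R is a lift of f which is an increasing homeomorphism of R
   commuting with x |-> x+1 (this expresses that f is orientation preserving) *)
Definition increasing_lift (f : S1 -> S1) (F : R -> R) :=
  [/\ continuous F, {homo F : x y / x < y},
      (forall x, F (x + 1) = F x + 1) & (forall x, f (piS x) = piS (F x))].

Definition rotation_number_of (F : R -> R) (rho : R) :=
  (fun n : nat => (iter n F 0 - 0) / n%:R) @ \oo --> rho.

Definition irrational (rho : R) := forall q : rat, rho != ratr q.

Definition open_arc (J : set S1) :=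
  exists a b : R, a < b < a + 1 /\ J = piS @` `]a, b[.

Definition Denjoy (f : S1 -> S1) (Gamma J0 : set S1) :=
  exists g : S1 -> S1,
  [/\ homeomorphism f g,
      (exists F rho, [/\ increasing_lift f F, rotation_number_of F rho & irrational rho]),
      [/\ cantor_subset Gamma, nowhere_dense Gamma, f @` Gamma = Gamma
        & forall x, Gamma x -> Gamma `<=` closure (zorbit f g x)] &
      [/\ open_arc J0,
          ~` Gamma = \bigcup_(m in [set: int]) (zit f g m @` J0)
        & forall m n : int, m != n -> (zit f g m @` J0) `&` (zit f g n @` J0) = set0]].
End Denjoy.

From HB Require Import structures.
From mathcomp Require Import all_boot all_order all_algebra.
From mathcomp Require Import all_classical all_reals all_analysis.
From mathcomp Require Import finmap lra zify.
Import Order.TTheory GRing.Theory Num.Theory numFieldNormedType.Exports.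
Local Open Scope classical_set_scope.
Local Open Scope ring_scope.

(* Write p : S^1 -> Y for the orbit projection.
   - p is an open map: the saturation of an open U is the union of the open
     sets f^m(U), m in Z.
   - Wandering lemma: a compact f-invariant set covered by the pairwise
     disjoint open arcs J_m = f^m(J_0) is empty, since a finite subcover
     misses J_N for large N while the invariant set would meet J_N.
   - (a) For U open meeting Gamma, the saturation P of U is open and, by
     density of orbits in Gamma, contains Gamma; its complement is compact,
     invariant and contained in the union of the J_m, hence empty.
   - (b) is (a) applied to p^-1(V), and (c) holds for any set containing a
     point whose only open neighbourhood is the whole space.
   - (d) J_0 meets every orbit at most once and points of S^1 are closed;
     if k(y) = p(w0) with w0 in J_0, then by (b) every k(z) lies in
     p(O) for every open O containing w0, which forces k(z) = p(w0). *)

Lemma iter_can {T : Type} {h k : T -> T} n : cancel h k -> cancel (iter n h) (iter n k).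
Proof. by move=> hk; elim: n => [//|n IH] x; rewrite iterSr iterS hk IH. Qed.

Lemma iter_continuous {T : topologicalType} (h : T -> T) n :
  continuous h -> continuous (iter n h).
Proof.
move=> hc; elim: n => [|n IH] x; first exact: cvg_id.
exact: (continuous_comp (IH x) (hc _)).
Qed.

Section IntegerIterates.
Context {T : topologicalType} {f g : T -> T} (fK : cancel f g) (gK : cancel g f).
Local Notation zit := (zit f g).

Lemma zit_pred m x : g (zit m x) = zit (m - 1) x.
Proof.
case: m => [[|n]|n]; first by [].
- have -> : (n.+1%:Z - 1 = n)%R by rewrite -addn1 PoszD addrK.
  by rewrite /= fK.
- have -> : (Negz n - 1 = Negz n.+1)%R by rewrite !NegzE -opprD -PoszD addn1.
  by [].
Qed.

Lemma iter_inv_zit a b x : iter b g (iter a f x) = zit (Posz a - Posz b) x.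
Proof.
elim: b => [|b IH]; first by rewrite subr0.
by rewrite iterS IH zit_pred -addn1 PoszD opprD addrA.
Qed.

Lemma orbit_relP x y : orbit_rel f x y <-> exists m, y = zit m x.
Proof.
split.
- move/asboolP => [a [b h]]; exists (Posz a - Posz b).
  by rewrite -iter_inv_zit h iter_can.
- move=> [[n|n] ->]; apply/asboolP; first by exists n, 0%N.
  by exists 0%N, n.+1; rewrite [RHS](iter_can _ gK).
Qed.

Lemma zitNK m x : zit (- m) (zit m x) = x.
Proof.
case: m => [[|n]|n] //=.
- by change (iter n.+1 g (iter n.+1 f x) = x); rewrite (iter_can _ fK).
- by change (iter n.+1 f (iter n.+1 g x) = x); rewrite (iter_can _ gK).
Qed.

Lemma zitKN m x : zit m (zit (- m) x) = x.
Proof. by rewrite -{1}(opprK m) zitNK. Qed.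

Lemma zit_image m A : zit m @` A = zit (- m) @^-1` A.
Proof.
apply/seteqP; split => x /=; first by move=> [a Aa <-]; rewrite zitNK.
by move=> Ax; exists (zit (- m) x); rewrite ?zitKN.
Qed.

Lemma zit_continuous m : continuous f -> continuous g -> continuous (zit m).
Proof. by move=> fc gc; case: m => n /=; apply: iter_continuous. Qed.
End IntegerIterates.

Section OrbitSpace.
Context {T : ptopologicalType} {f g : T -> T} (fK : cancel f g) (gK : cancel g f)
  (fc : continuous f) (gc : continuous g).
Local Notation zit := (zit f g).
Local Notation p := (orbit_proj f).

Lemma orbit_projE x y : p x = p y <-> exists m, y = zit m x.
Proof.
rewrite -(orbit_relP fK gK).
by split => [/eqmodP|?]; last apply/eqmodP.
Qed.

Lemma orbit_proj_zit m x : p (zit m x) = p x.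
Proof. by apply/esym/orbit_projE; exists m. Qed.

Lemma orbit_proj_surj (v : orbit_space f) : exists u, v = p u.
Proof. by exists (repr v); rewrite /orbit_proj reprK. Qed.

(* The orbit projection is an open map: the saturation of an open set O is
   the union of the open sets f^m(O). *)
Lemma orbit_proj_open (O : set T) : open O -> open (p @` O).
Proof.
move=> oO; change (open (p @^-1` (p @` O))).
have -> : p @^-1` (p @` O) = \bigcup_(m in [set: int]) (zit m @^-1` O).
  apply/seteqP; split => x /=.
  - by move=> [u Ou /orbit_projE [m ->]]; exists (- m); rewrite //= zitNK.
  - by move=> [m _ /= Om]; exists (zit m x); rewrite ?orbit_proj_zit.
apply: bigcup_open => m _; apply: open_comp => // x _.
exact: zit_continuous.
Qed.

Definition wandering (J0 : set T) :=
  forall m n : int, m != n -> zit m @` J0 `&` zit n @` J0 = set0.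

Section Wandering.
Variable J0 : set T.
Hypotheses (J0_open : open J0) (J0_wandering : wandering J0).

Lemma wandering_iterate_open m : open (zit m @` J0).
Proof.
rewrite (zit_image fK gK); apply: open_comp => // x _.
exact: zit_continuous.
Qed.

Lemma wandering_orbit_inj x y : J0 x -> J0 y -> p x = p y -> x = y.
Proof.
move=> J0x J0y /orbit_projE [m yE]; subst y; have [->//|m0] := eqVneq m 0.
suff : (zit m @` J0 `&` zit 0 @` J0) (zit m x) by rewrite J0_wandering.
by split; [exists x | exists (zit m x)].
Qed.

(* A compact union of orbits covered by the iterates of an open wandering set
   is empty: a finite subcover misses f^n(J0) for some n, yet every orbit
   through f^m(J0) also meets f^n(J0). *)
Lemma invariant_compact_wandering_empty (C : set T) :
  compact C -> (forall x y, p x = p y -> C x -> C y) ->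
  C `<=` \bigcup_(m in [set: int]) (zit m @` J0) -> C = set0.
Proof.
move=> cC C_inv CJ; apply/seteqP; split => // x Cx; exfalso.
move: cC; rewrite compact_cover => /(_ int) cC.
have [D _ CD] := cC [set: int] (fun m => zit m @` J0)
  (fun m _ => wandering_iterate_open m) CJ.
pose n := (\max_(d <- D) `|d|%N).+1.
have nD : n%:Z \notin D.
  apply/negP => /(@leq_bigmax_seq _ _ xpredT (fun d : int => `|d|%N)).
  by move=> /(_ isT); rewrite ltnn.
have [m _ [j J0j xE]] := CJ x Cx.
have Cj : C (zit n j) by apply: C_inv Cx; rewrite -xE !orbit_proj_zit.
have [d Dd dj] := CD _ Cj.
have nd : n%:Z != d by apply: contraNneq nD => ->.
suff : (zit n @` J0 `&` zit d @` J0) (zit n j) by rewrite J0_wandering.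
by split => //; exists j.
Qed.

(* If points of T are closed, a continuous self-map of the orbit
   space sending y to the orbit of a point of J0 is constant: every value k z
   lies in p(O) for each open O containing w0, and J0 meets orbits once. *)
Lemma generic_to_wandering_constant (k : orbit_space f -> orbit_space f) y w0 :
  (forall x : T, closed [set x]) -> continuous k ->
  (forall V, open V -> V y -> V = setT) -> J0 w0 -> k y = p w0 ->
  forall z, k z = k y.
Proof.
move=> T1 kc y_generic J0w0 kyE z.
have hit O : open O -> O w0 -> exists2 u, O u & p u = k z.
  move=> oO Ow0.
  have oV : open (k @^-1` (p @` O)).
    by move/continuousP: kc; apply; exact: orbit_proj_open.
  suff : (k @^-1` (p @` O)) z by [].
  by rewrite (y_generic _ oV) //= kyE; exists w0.
have [w1 J0w1 kzE] := hit J0 J0_open J0w0.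
suff w1E : w1 = w0 by rewrite -kzE w1E kyE.
apply: contrapT => w1w0.
have [u [J0u uw1] puE] : exists2 u, (J0 `&` ~` [set w1]) u & p u = k z.
  apply: hit; last by split => // /esym.
  by apply: openI => //; rewrite openC.
by apply: uw1; apply: wandering_orbit_inj; rewrite // puE.
Qed.
End Wandering.

Section DenseOrbits.
Variables (Gamma J0 : set T).
Hypotheses (T_compact : compact [set: T]) (J0_open : open J0)
  (J0_wandering : wandering J0)
  (Gamma_dense : forall x, Gamma x -> Gamma `<=` closure (zorbit f g x))
  (Gamma_gaps : ~` Gamma = \bigcup_(m in [set: int]) (zit m @` J0)).

(* Its saturation P is open
   and contains Gamma by density; the complement of P is compact, a union of
   orbits, and covered by the iterates of J0, hence empty. *)
Lemma saturation_full (U : set T) :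
  open U -> U `&` Gamma !=set0 -> p @^-1` (p @` U) = setT.
Proof.
move=> oU [w [Uw Gw]]; set P := p @^-1` (p @` U).
have GP : Gamma `<=` P.
  move=> z Gz.
  have [_ [[m _ <-] Um]] := Gamma_dense _ Gz _ Gw _ (open_nbhs_nbhs (conj oU Uw)).
  by exists (zit m z); rewrite ?orbit_proj_zit.
have P_sat x y : p x = p y -> ~ P x -> ~ P y.
  by move=> pxy nPx [u Uu puy]; apply: nPx; exists u; rewrite // puy.
apply: setC_inj; rewrite setCT.
apply: invariant_compact_wandering_empty J0_open J0_wandering _ _ P_sat _.
- apply: (subclosed_compact _ T_compact) => //.
  by rewrite closedC; exact: orbit_proj_open.
- by rewrite -Gamma_gaps => x nPx Gx; exact/nPx/GP.
Qed.

Lemma orbit_space_open_full (V : set (orbit_space f)) :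
  open V -> V `&` p @` Gamma !=set0 -> V = setT.
Proof.
move=> oV [y [Vy [x Gx pxy]]]; rewrite -pxy in Vy.
have full := @saturation_full (p @^-1` V) oV (ex_intro _ x (conj Vy Gx)).
apply/seteqP; split => // v _; have [u ->] := orbit_proj_surj v.
have : (p @^-1` (p @` (p @^-1` V))) u by rewrite full.
by case=> u' Vu' <-.
Qed.
End DenseOrbits.
End OrbitSpace.

(* (c) in general form: a set containing a point whose only open neighbourhood
   is the whole space is compact, since that point clusters every proper filter. *)
Lemma compact_of_generic_point {X : topologicalType} (y : X) (L : set X) :
  (forall V, open V -> V y -> V = setT) -> L y -> compact L.
Proof.
move=> y_generic Ly F PF FL; exists y; split => // A B FA.
rewrite nbhsE => -[V [oV Vy] VB].
have [x Ax] := filter_ex FA.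
by exists x; split => //; apply: VB; rewrite (y_generic V).
Qed.

Section Circle.
Variable R : realType.
Local Notation S1 := (S1 R).

Lemma piS_eq (x y : R) : piS x = piS y <-> (x - y) \is a Num.int.
Proof. by split => [/eqmodP|?]; last apply/eqmodP. Qed.

Lemma int_not_in01 {r : R} : r \is a Num.int -> 0 < r < 1 -> False.
Proof. by move=> /intrP [k ->]; rewrite ltr0z ltrz1; lia. Qed.

(* The covering map R -> S^1 is open: the saturation of an open A is the
   union of its integer translates. *)
Lemma piS_open (A : set R) : open A -> open (piS @` A).
Proof.
move=> oA; change (open (piS @^-1` (piS @` A))).
have -> : piS @^-1` (piS @` A) =
    \bigcup_(k in [set: int]) ((fun x : R => x - k%:~R) @^-1` A).
  apply/seteqP; split => x /=.
  - move=> [a Aa /piS_eq /intrP [k hk]]; exists (- k) => //=.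
    by rewrite mulrNz opprK -hk addrC subrK.
  - move=> [k _ /= Ak]; exists (x - k%:~R) => //; apply/piS_eq.
    by rewrite addrAC subrr add0r rpredN intr_int.
apply: bigcup_open => k _; apply: open_comp => // x _.
exact: (cvgB cvg_id (cvg_cst _)).
Qed.

Lemma piS_fundamental (t : R) (v : S1) : exists2 x, t <= x < t + 1 & v = piS x.
Proof.
pose r : R := repr v; pose n := Num.floor (r - t).
exists (r - n%:~R); last first.
  rewrite /piS -[v]reprK; apply/esym/piS_eq.
  by rewrite addrAC subrr add0r rpredN intr_int.
have /andP [nle ltn] := floor_itv (r - t).
by rewrite intrD mulr1z in ltn; apply/andP; split; lra.
Qed.

(* S^1 is compact, as the continuous image of [0, 1]. *)
Lemma S1_compact : compact [set: S1].
Proof.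
have -> : [set: S1] = piS @` `[0, 1].
  apply/seteqP; split => // v _; have [x /andP [x0 x1] ->] := piS_fundamental 0 v.
  by exists x => //; rewrite /= in_itv /= x0 ltW // -(add0r 1).
apply: continuous_compact; last exact: segment_compact.
by apply: continuous_subspaceT; exact: pi_continuous.
Qed.

(* Points of S^1 are closed: the complement of piS t is the open arc
   piS(]t, t + 1[). *)
Lemma S1_closed_set1 (v : S1) : closed [set v].
Proof.
have [t _ ->] := piS_fundamental 0 v.
rewrite -[X in closed X]setCK closedC.
have -> : ~` [set piS t] = piS @` `]t, t + 1[.
  apply/seteqP; split => [w /= wt | _ [u tu <-] /= /piS_eq ut].
  - have [x /andP [tx xt1] wE] := piS_fundamental t w.
    exists x => //; rewrite /= in_itv /= xt1 andbT lt_neqAle tx andbT.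
    by apply/eqP => xE; apply: wt; rewrite wE xE.
  - apply: (int_not_in01 ut); move: tu; rewrite /= in_itv /= => /andP [? ?].
    by apply/andP; split; lra.
by apply: piS_open; exact: itv_open.
Qed.
End Circle.

Theorem mainTheorem13 (R : realType) (f : S1 R -> S1 R) (Gamma J0 : set (S1 R)) :
  Denjoy f Gamma J0 ->
  let p := orbit_proj f in
  let Q := p @` Gamma in
  let J := p @` (~` Gamma) in
  [/\ (* (a) *)
      (forall U : set (S1 R), open U -> U `&` Gamma !=set0 -> p @^-1` (p @` U) = setT),
      (* (b) *)
      (forall V : set (orbit_space f), open V -> V `&` Q !=set0 -> V = setT),
      (* (c) *)
      (forall L : set (orbit_space f), L `&` Q !=set0 -> compact L) &
      (* (d) *)
      (forall (k : orbit_space f -> orbit_space f) (y : orbit_space f),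
         continuous k -> Q y -> J (k y) -> forall z, k z = k y)].
Proof.
move=> [g [[fc gc fK gK] _ [_ _ _ Gamma_dense]
  [[a [b [_ J0E]]] Gamma_gaps J0_wandering]]] p Q J.
have J0_open : open J0 by rewrite J0E; apply: piS_open; exact: itv_open.
have Q_generic := orbit_space_open_full fK gK fc gc Gamma J0 (S1_compact R)
  J0_open J0_wandering Gamma_dense Gamma_gaps.
have generic y : Q y -> forall V, open V -> V y -> V = setT.
  by move=> Qy V oV Vy; apply: Q_generic => //; exists y.
split.
- exact: (saturation_full fK gK fc gc Gamma J0 (S1_compact R) J0_open
    J0_wandering Gamma_dense Gamma_gaps).
- exact: Q_generic.
- by move=> L [y [Ly /generic y_generic]]; exact: compact_of_generic_point Ly.
- move=> k y kc Qy [w Gw kyE].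
  have [m _ [w0 J0w0 wE]] : (\bigcup_(m in [set: int]) (zit f g m @` J0)) w.
    by rewrite -Gamma_gaps.
  apply: (generic_to_wandering_constant fK gK fc gc J0 J0_open J0_wandering
    k y w0 (@S1_closed_set1 R) kc (generic _ Qy) J0w0).
  by rewrite -kyE -wE /p (orbit_proj_zit fK gK).
Qed.
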